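(* Let $\mathbf{Y}\sim\mathcal{SUT}_{d,m}(\boldsymbol{\xi},\boldsymbol{\Omega},\boldsymbol{\Delta},\boldsymbol{\tau},\bar{\boldsymbol{\Gamma}},\nu)$ with $d=d_1+d_2$, $d_1,d_2\ge1$, partitioned as $\mathbf{Y}=(\mathbf{Y}_1^\top,\mathbf{Y}_2^\top)^\top$, $\boldsymbol{\xi}=(\boldsymbol{\xi}_1^\top,\boldsymbol{\xi}_2^\top)^\top$, $\boldsymbol{\Omega}=(\boldsymbol{\Omega}_{ij})_{i,j=1,2}$, $\boldsymbol{\Delta}=(\boldsymbol{\Delta}_1^\top,\boldsymbol{\Delta}_2^\top)^\top$, with $\mathbf{Y}_i,\boldsymbol{\xi}_i\in\mathbb{R}^{d_i}$, $\boldsymbol{\Omega}_{ij}\in\mathbb{R}^{d_i\times d_j}$, $\boldsymbol{\Delta}_i\in\mathbb{R}^{d_i\times m}$; let $\boldsymbol{\omega}_i=\mathrm{diag}(\boldsymbol{\Omega}_{ii})^{1/2}$ and $\bar{\boldsymbol{\Omega}}_{ij}=\boldsymbol{\omega}_i^{-1}\boldsymbol{\Omega}_{ij}\boldsymbol{\omega}_j^{-1}$. Then the conditional distribution of $\mathbf{Y}_2$ given $\mathbf{Y}_1>\mathbf{0}$ (componentwise) is $$(\mathbf{Y}_2\mid\mathbf{Y}_1>\mathbf{0})\sim\mathcal{SUT}_{d_2,d_1+m}(\boldsymbol{\xi}_2,\boldsymbol{\Omega}_{22},\boldsymbol{\Delta}_{2\neg1},\boldsymbol{\tau}_{2\neg1},\bar{\boldsymbol{\Gamma}}_{2\neg1},\nu),$$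 where $\boldsymbol{\Delta}_{2\neg1}=\begin{pmatrix}\boldsymbol{\Delta}_2&\bar{\boldsymbol{\Omega}}_{21}\end{pmatrix}$, $\bar{\boldsymbol{\Gamma}}_{2\neg1}=\begin{pmatrix}\bar{\boldsymbol{\Gamma}}&\boldsymbol{\Delta}_1^\top\\ \boldsymbol{\Delta}_1&\bar{\boldsymbol{\Omega}}_{11}\end{pmatrix}$, and $\boldsymbol{\tau}_{2\neg1}=\begin{pmatrix}\boldsymbol{\tau}\\ \boldsymbol{\omega}_1^{-1}\boldsymbol{\xi}_1\end{pmatrix}$.
   Context: Notation: $\mathcal{T}_k(\boldsymbol{\mu},\boldsymbol{\Sigma},\nu)$ is the $k$-dimensional Student $t$ distribution with location $\boldsymbol{\mu}$, dispersion $\boldsymbol{\Sigma}$ and $\nu>0$ degrees of freedom. For dimension $p$ and latent dimension $q$: parameters are $\boldsymbol{\xi}\in\mathbb{R}^p$; $\boldsymbol{\Omega}$ a $p\times p$ positive definite matrix, $\boldsymbol{\omega}=\mathrm{diag}(\boldsymbol{\Omega})^{1/2}$, $\bar{\boldsymbol{\Omega}}=\boldsymbol{\omega}^{-1}\boldsymbol{\Omega}\boldsymbol{\omega}^{-1}$; $\boldsymbol{\Delta}$ a $p\times q$ matrix; $\bar{\boldsymbol{\Gamma}}$ a $q\times q$ correlation matrix; $\boldsymbol{\tau}\in\mathbb{R}^q$; $\nu>0$; with $\bar{\boldsymbol{\Omega}}^*=\begin{pmatrix}\bar{\boldsymbol{\Gamma}}&\boldsymbol{\Delta}^\top\\ \boldsymbol{\Delta}&\bar{\boldsymbol{\Omega}}\end{pmatrix}$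 positive definite. If $(\mathbf{U}_0^\top,\mathbf{U}_1^\top)^\top\sim\mathcal{T}_{q+p}(\mathbf{0},\bar{\boldsymbol{\Omega}}^*,\nu)$ ($\mathbf{U}_0\in\mathbb{R}^q$, $\mathbf{U}_1\in\mathbb{R}^p$) and $\mathbf{Z}$ has the conditional distribution of $\mathbf{U}_1$ given $\mathbf{U}_0+\boldsymbol{\tau}>\mathbf{0}$ (componentwise), then $\mathbf{Y}=\boldsymbol{\xi}+\boldsymbol{\omega}\mathbf{Z}$ has distribution $\mathcal{SUT}_{p,q}(\boldsymbol{\xi},\boldsymbol{\Omega},\boldsymbol{\Delta},\boldsymbol{\tau},\bar{\boldsymbol{\Gamma}},\nu)$. *)

From HB Require Import structures.
From mathcomp Require Import all_boot all_order all_algebra.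
From mathcomp Require Import all_classical all_reals all_analysis.

Set Implicit Arguments.
Unset Strict Implicit.
Unset Printing Implicit Defensive.

Import Order.TTheory GRing.Theory Num.Theory.
Local Open Scope ring_scope.
Local Open Scope classical_set_scope.

Section SUT.
Variable R : realType.

(* coordinates: the measurable space R^k is k.-tuple R (product = Borel sigma-algebra) *)
Definition tcol (k : nat) (t : k.-tuple R) : 'cV[R]_k := \col_i tnth t i.
Definition coltup (k : nat) (v : 'cV[R]_k) : k.-tuple R := [tuple v i 0 | i < k].

(* Lebesgue integral over R^k of a nonnegative function, as the iterated
   integral against the one-dimensional Lebesgue measure (Tonelli). *)
Fixpoint lebint (k : nat) : (k.-tuple R -> \bar R) -> \bar R :=
  match k return (k.-tuple R -> \bar R) -> \bar R with
  | 0 => fun f => f [tuple]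
  | k'.+1 => fun f =>
      (\int[@lebesgue_measure R]_x lebint (fun v : k'.-tuple R => f (cons_tuple x v)))%E
  end.

Definition posdef (k : nat) (A : 'M[R]_k) : Prop :=
  A^T = A /\ forall x : 'cV[R]_k, x != 0 -> 0 < (x^T *m A *m x) 0 0.

Definition psd (k : nat) (A : 'M[R]_k) : Prop :=
  A^T = A /\ forall x : 'cV[R]_k, 0 <= (x^T *m A *m x) 0 0.

Definition correlation (k : nat) (A : 'M[R]_k) : Prop :=
  psd A /\ forall i, A i i = 1.

Definition dsqrt (k : nat) (A : 'M[R]_k) : 'M[R]_k :=
  diag_mx (\row_i Num.sqrt (A i i)).

Definition corrmx (k : nat) (A : 'M[R]_k) : 'M[R]_k :=
  invmx (dsqrt A) *m A *m invmx (dsqrt A).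

(* Kernel of the k-dimensional Student t density T_k(0, Sigma, nu):
   the density is c * tkernel with c a normalising constant. *)
Definition tkernel (k : nat) (Sigma : 'M[R]_k) (nu : R) (x : 'cV[R]_k) : R :=
  powR (1 + (x^T *m invmx Sigma *m x) 0 0 / nu) (- ((nu + k%:R) / 2)).

(* Law of SUT_{p,q}(xi, Omega, Delta, tau, Gammab, nu): for A a set of R^p,
   P(xi + omega Z in A) where Z ~ (U1 | U0 + tau > 0),
   (U0, U1) ~ T_{q+p}(0, Omegabar*, nu).  Normalising constants cancel. *)
Definition SUT_law (p q : nat) (xi : 'cV[R]_p) (Omega : 'M[R]_p)
    (Delta : 'M[R]_(p, q)) (tau : 'cV[R]_q) (Gammab : 'M[R]_q) (nu : R)
    (A : set (p.-tuple R)) : R :=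
  let S : 'M[R]_(q + p) := block_mx Gammab Delta^T Delta (corrmx Omega) in
  let trunc (u : 'cV[R]_(q + p)) := forall i, 0 < (usubmx u + tau) i 0 in
  let E := [set t : (q + p).-tuple R | trunc (tcol t)] in
  let EA := [set t : (q + p).-tuple R | trunc (tcol t) /\
               A (coltup (xi + dsqrt Omega *m dsubmx (tcol t)))] in
  fine (lebint (fun t => (tkernel S nu (tcol t) * \1_EA t)%:E)) /
  fine (lebint (fun t => (tkernel S nu (tcol t) * \1_E t)%:E)).

Definition has_SUT_law (d0 : measure_display) (T : measurableType d0)
    (P : probability T R) (p q : nat) (Y : T -> p.-tuple R)
    (xi : 'cV[R]_p) (Omega : 'M[R]_p) (Delta : 'M[R]_(p, q)) (tau : 'cV[R]_q)
    (Gammab : 'M[R]_q) (nu : R) : Prop :=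
  forall A : set (p.-tuple R), measurable A ->
    P (Y @^-1` A) = (SUT_law xi Omega Delta tau Gammab nu A)%:E.

Definition condprob (d0 : measure_display) (T : measurableType d0)
    (P : probability T R) (E F : set T) : R :=
  fine (P (E `&` F)) / fine (P F).

End SUT.

From HB Require Import structures.
From mathcomp Require Import all_boot all_order all_algebra.
From mathcomp Require Import all_classical all_reals all_analysis.

Import Order.TTheory GRing.Theory Num.Theory.
Local Open Scope ring_scope.
Local Open Scope classical_set_scope.

Set Implicit Arguments.
Unset Strict Implicit.
Unset Printing Implicit Defensive.

(* Write the latent vector as (U0, V, W) with V in R^d1 and W in R^d2, so that
   Y1 = xi1 + omega1 V and Y2 = xi2 + omega2 W.  As omega1 is a positive
   diagonal matrix, Y1 > 0 iff V + omega1^-1 xi1 > 0: conditioning on Y1 > 0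
   moves V from the observed block into the truncated one, with the extra
   threshold omega1^-1 xi1.  Regrouping (U0, (V, W)) as ((U0, V), W) leaves the
   Student t kernel unchanged, and its dispersion matrix regrouped is exactly
   the one built from Gammab_{2-1} and Delta_{2-1}, because the correlation
   matrix of Omega splits into the blocks Omegab11, Omegab21^T, Omegab21 and
   Omegab22.  The normalising constants cancel in the conditional probability. *)

Lemma diag_mx_unit (F : fieldType) n (d : 'rV[F]_n) :
  (forall i, d 0 i != 0) -> diag_mx d \in unitmx.
Proof.
move=> d_neq0; rewrite unitmxE unitfE det_diag prodf_seq_neq0.
by apply/allP => i _; apply: d_neq0.
Qed.

Lemma invmx_diag_mx (F : fieldType) n (d : 'rV[F]_n) :
  (forall i, d 0 i != 0) -> invmx (diag_mx d) = diag_mx (\row_i (d 0 i)^-1).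
Proof.
move=> d_neq0; rewrite -[RHS](mulKmx (diag_mx_unit d_neq0)).
suff -> : diag_mx d *m diag_mx (\row_i (d 0 i)^-1) = 1%:M by rewrite mulmx1.
apply/matrixP => i j; rewrite mul_diag_mx !mxE.
by case: eqP => [->|_]; rewrite ?mulr1n ?mulr0n ?mulr0 // mulfV.
Qed.

Section DiagonalScaling.
Variable R : realType.

Lemma posdef_diag_gt0 n (A : 'M[R]_n) i : posdef A -> 0 < A i i.
Proof.
case=> _ /(_ (delta_mx i 0)).
rewrite trmx_delta -rowE -colE !mxE; apply.
by apply/eqP => /matrixP/(_ i 0); rewrite !mxE !eqxx => /eqP; rewrite oner_eq0.
Qed.

Lemma dsqrt_unit n (A : 'M[R]_n) : (forall i, 0 < A i i) -> dsqrt A \in unitmx.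
Proof. by move=> A_gt0; apply: diag_mx_unit => i; rewrite mxE sqrtr_eq0 -ltNge. Qed.

Lemma invmx_dsqrt n (A : 'M[R]_n) : (forall i, 0 < A i i) ->
  invmx (dsqrt A) = diag_mx (\row_i (Num.sqrt (A i i))^-1).
Proof.
move=> A_gt0; rewrite invmx_diag_mx => [|i]; last by rewrite mxE sqrtr_eq0 -ltNge.
by congr diag_mx; apply/rowP => i; rewrite !mxE.
Qed.

Lemma dsqrt_block n1 n2 (A : 'M[R]_(n1 + n2)) :
  dsqrt A = block_mx (dsqrt (ulsubmx A)) 0 0 (dsqrt (drsubmx A)).
Proof.
rewrite /dsqrt -diag_mx_row; congr diag_mx; apply/rowP => i.
by case: (split_ordP i) => k ->; rewrite ?row_mxEl ?row_mxEr ?mxE.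
Qed.

Lemma corrmx_block n1 n2 (A : 'M[R]_(n1 + n2)) :
  A^T = A -> (forall i, 0 < A i i) ->
  let C21 := invmx (dsqrt (drsubmx A)) *m dlsubmx A *m invmx (dsqrt (ulsubmx A)) in
  corrmx A = block_mx (corrmx (ulsubmx A)) C21^T C21 (corrmx (drsubmx A)).
Proof.
move=> A_sym A_gt0 C21.
have ul_gt0 i : 0 < ulsubmx A i i by rewrite !mxE.
have dr_gt0 i : 0 < drsubmx A i i by rewrite !mxE.
have A_ur : ursubmx A = (dlsubmx A)^T by rewrite trmx_dlsub A_sym.
rewrite /corrmx dsqrt_block invmx_block_diag; last first.
  by rewrite block_diag_mx_unit !dsqrt_unit.
rewrite -[X in _ *m X *m _]submxK A_ur !mulmx_block.
rewrite !(mulmx0, mul0mx, addr0, add0r).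
by congr block_mx; rewrite /C21 !trmx_mul !trmx_inv /dsqrt !tr_diag_mx mulmxA.
Qed.

Lemma col_mx_gt0 n1 n2 (a : 'cV[R]_n1) (b : 'cV[R]_n2) :
  (forall i, 0 < col_mx a b i 0) <-> (forall i, 0 < a i 0) /\ (forall i, 0 < b i 0).
Proof.
split=> [ab_gt0|[a_gt0 b_gt0] i].
  by split=> i; [have := ab_gt0 (lshift n2 i) | have := ab_gt0 (rshift n1 i)];
    rewrite ?col_mxEu ?col_mxEd.
by case: (split_ordP i) => k ->; rewrite ?col_mxEu ?col_mxEd.
Qed.

Lemma dsqrt_shift_gt0 n (A : 'M[R]_n) (a v : 'cV[R]_n) i : (forall i, 0 < A i i) ->
  (0 < (a + dsqrt A *m v) i 0) = (0 < (v + invmx (dsqrt A) *m a) i 0).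
Proof.
move=> A_gt0; rewrite invmx_dsqrt // /dsqrt !mul_diag_mx !mxE.
have s_gt0 : 0 < Num.sqrt (A i i) by rewrite sqrtr_gt0.
have -> : v i 0 + (Num.sqrt (A i i))^-1 * a i 0
    = (Num.sqrt (A i i))^-1 * (a i 0 + Num.sqrt (A i i) * v i 0).
  by rewrite mulrDr mulrA mulVf ?gt_eqF // mul1r addrC.
by rewrite pmulr_rgt0 // invr_gt0.
Qed.

End DiagonalScaling.

Definition tuple_usub {T : Type} {n1 n2 : nat} (y : (n1 + n2).-tuple T) : n1.-tuple T :=
  [tuple tnth y (lshift n2 i) | i < n1].
Definition tuple_dsub {T : Type} {n1 n2 : nat} (y : (n1 + n2).-tuple T) : n2.-tuple T :=
  [tuple tnth y (rshift n1 j) | j < n2].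

Section TupleCoordinates.
Variable R : realType.

Lemma tnth_coltup n (v : 'cV[R]_n) i : tnth (coltup v) i = v i 0.
Proof. exact: tnth_mktuple. Qed.

Lemma tuple_usub_coltup n1 n2 (v : 'cV[R]_(n1 + n2)) :
  tuple_usub (coltup v) = coltup (usubmx v).
Proof. by apply: eq_from_tnth => i; rewrite !tnth_mktuple mxE. Qed.

Lemma tuple_dsub_coltup n1 n2 (v : 'cV[R]_(n1 + n2)) :
  tuple_dsub (coltup v) = coltup (dsubmx v).
Proof. by apply: eq_from_tnth => i; rewrite !tnth_mktuple mxE. Qed.

Lemma tcol_tcast n n' (e : n = n') (t : n.-tuple R) :
  tcol (tcast e t) = castmx (e, erefl) (tcol t).
Proof. by case: n' / e; rewrite tcast_id castmx_id. Qed.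

Lemma lebint_tcast n n' (e : n = n') (f : n.-tuple R -> \bar R) :
  lebint f = lebint (fun t : n'.-tuple R => f (tcast (esym e) t)).
Proof. by case: n' / e; congr lebint; apply: funext => t; rewrite tcast_id. Qed.

Lemma tkernel_castmx n n' (e : n = n') (S : 'M[R]_n) nu (x : 'cV[R]_n) :
  tkernel (castmx (e, e) S) nu (castmx (e, erefl) x) = tkernel S nu x.
Proof. by case: n' / e; rewrite !castmx_id. Qed.

Lemma measurable_tuple_usub n1 n2 : measurable_fun setT (@tuple_usub R n1 n2).
Proof.
apply/measurable_fun_tnthP => i.
have -> : @tnth _ R ^~ i \o @tuple_usub R n1 n2 = @tnth _ R ^~ (lshift n2 i).
  by apply: funext => y /=; rewrite tnth_mktuple.
exact: measurable_tnth.
Qed.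

Lemma measurable_tuple_dsub n1 n2 : measurable_fun setT (@tuple_dsub R n1 n2).
Proof.
apply/measurable_fun_tnthP => j.
have -> : @tnth _ R ^~ j \o @tuple_dsub R n1 n2 = @tnth _ R ^~ (rshift n1 j).
  by apply: funext => y /=; rewrite tnth_mktuple.
exact: measurable_tnth.
Qed.

Lemma measurable_tuple_gt0 n : measurable [set z : n.-tuple R | forall i, 0 < tnth z i].
Proof.
have -> : [set z : n.-tuple R | forall i, 0 < tnth z i] =
    \bigcap_(i in [set: 'I_n]) (@tnth _ R ^~ i @^-1` `]0, +oo[%classic).
  apply/seteqP; split => z /=.
    by move=> z_gt0 i _; rewrite /= in_itv /= andbT.
  by move=> z_gt0 i; move: (z_gt0 i I); rewrite /= in_itv /= andbT.
apply: fin_bigcap_measurable; first exact: finite_finset.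
move=> i _; rewrite -[X in measurable X]setTI.
by apply: measurable_tnth => //; exact: measurable_itv.
Qed.

End TupleCoordinates.

Section SUTMass.
Variable R : realType.

Definition SUT_mass (p q : nat) (xi : 'cV[R]_p) (Omega : 'M[R]_p)
    (Delta : 'M[R]_(p, q)) (tau : 'cV[R]_q) (Gammab : 'M[R]_q) (nu : R)
    (A : set (p.-tuple R)) : R :=
  let S := block_mx Gammab Delta^T Delta (corrmx Omega) in
  let EA := [set t : (q + p).-tuple R |
    (forall i, 0 < (usubmx (tcol t) + tau) i 0) /\
    A (coltup (xi + dsqrt Omega *m dsubmx (tcol t)))] in
  fine (lebint (fun t => (tkernel S nu (tcol t) * \1_EA t)%:E)).

Lemma SUT_lawE p q xi Omega Delta tau Gammab nu (A : set (p.-tuple R)) :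
  @SUT_law R p q xi Omega Delta tau Gammab nu A =
  SUT_mass xi Omega Delta tau Gammab nu A / SUT_mass xi Omega Delta tau Gammab nu setT.
Proof.
rewrite /SUT_law /SUT_mass /=; congr (_ / fine (lebint _)); apply: funext => t.
by congr (_ * \1_ _ t)%:E; apply/seteqP; split => u /= => [|[]].
Qed.

Lemma condprob_SUT d0 (T : measurableType d0) (P : probability T R) p q
    (Y : T -> p.-tuple R) xi Omega Delta (tau : 'cV[R]_q) Gammab nu A C :
  has_SUT_law P Y xi Omega Delta tau Gammab nu -> measurable A -> measurable C ->
  condprob P (Y @^-1` A) (Y @^-1` C) =
  SUT_mass xi Omega Delta tau Gammab nu (A `&` C) /
  SUT_mass xi Omega Delta tau Gammab nu C.
Proof.
move=> Y_SUT mA mC; set mass := SUT_mass _ _ _ _ _ _.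
have mass_neq0 : mass setT != 0.
  apply/eqP => mass0; have := Y_SUT setT measurableT.
  rewrite preimage_setT probability_setT SUT_lawE -/mass mass0 invr0 mulr0.
  by move/eqP; rewrite eqe oner_eq0.
rewrite /condprob -preimage_setI !Y_SUT ?SUT_lawE -/mass //=; last exact: measurableI.
by rewrite invfM invrK [_^-1 * mass setT]mulrC mulrA divfK.
Qed.

End SUTMass.

Section ConditionOnFirstBlock.
Variables (R : realType) (d1 d2 m : nat) (xi : 'cV[R]_(d1 + d2))
  (Omega : 'M[R]_(d1 + d2)) (Delta : 'M[R]_(d1 + d2, m)) (tau : 'cV[R]_m)
  (Gammab : 'M[R]_m) (nu : R).
Hypotheses (Omega_sym : Omega^T = Omega) (Omega_gt0 : forall i, 0 < Omega i i).

Local Notation omega1 := (dsqrt (ulsubmx Omega)).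
Local Notation Omegab21 :=
  (invmx (dsqrt (drsubmx Omega)) *m dlsubmx Omega *m invmx omega1).
Local Notation Delta21 := (row_mx (dsubmx Delta) Omegab21).
Local Notation Gammab21 :=
  (block_mx Gammab (usubmx Delta)^T (usubmx Delta) (corrmx (ulsubmx Omega))).
Local Notation tau21 := (col_mx tau (invmx omega1 *m usubmx xi)).

Lemma SUT_scale_regroup :
  block_mx Gammab Delta^T Delta (corrmx Omega) =
  castmx (esym (addnA m d1 d2), esym (addnA m d1 d2))
    (block_mx Gammab21 Delta21^T Delta21 (corrmx (drsubmx Omega))).
Proof.
rewrite (corrmx_block Omega_sym Omega_gt0) -{1 2}[Delta]vsubmxK tr_col_mx.
by rewrite block_mxA tr_row_mx.
Qed.

Lemma SUT_event_split (B : set (d2.-tuple R)) (u : 'cV[R]_m) (v : 'cV[R]_d1)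
    (w : 'cV[R]_d2) :
  let y := coltup (xi + dsqrt Omega *m col_mx v w) in
  (forall i, 0 < (u + tau) i 0) /\
    (B (tuple_dsub y) /\ forall i, 0 < tnth (tuple_usub y) i)
  <-> (forall i, 0 < (col_mx u v + tau21) i 0) /\
      B (coltup (dsubmx xi + dsqrt (drsubmx Omega) *m w)).
Proof.
have ul_gt0 i : 0 < ulsubmx Omega i i by rewrite !mxE.
have -> : xi + dsqrt Omega *m col_mx v w =
    col_mx (usubmx xi + omega1 *m v) (dsubmx xi + dsqrt (drsubmx Omega) *m w).
  by rewrite dsqrt_block mul_block_col !mul0mx addr0 add0r -{1}[xi]vsubmxK add_col_mx.
rewrite /= tuple_usub_coltup tuple_dsub_coltup col_mxKu col_mxKd add_col_mx col_mx_gt0.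
have shift_gt0 i : 0 < tnth (coltup (usubmx xi + omega1 *m v)) i <->
    0 < (v + invmx omega1 *m usubmx xi) i 0.
  by rewrite tnth_coltup dsqrt_shift_gt0.
by split=> [[? [? /(_ _)/shift_gt0 ?]]|[[? /(_ _)/shift_gt0 ?] ?]].
Qed.

Lemma SUT_mass_condition (B : set (d2.-tuple R)) :
  SUT_mass xi Omega Delta tau Gammab nu
    (@tuple_dsub R d1 d2 @^-1` B `&`
     @tuple_usub R d1 d2 @^-1` [set z | forall i, 0 < tnth z i])
  = SUT_mass (dsubmx xi) (drsubmx Omega) Delta21 tau21 Gammab21 nu B.
Proof.
rewrite /SUT_mass (lebint_tcast (addnA m d1 d2)); congr (fine (lebint _)).
apply: funext => t; rewrite tcol_tcast SUT_scale_regroup tkernel_castmx.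
congr (_ * _)%:E; rewrite /indic; congr ((nat_of_bool _)%:R).
apply/idP/idP; rewrite !in_setE /= tcol_tcast.
all: rewrite -[tcol t]vsubmxK -[usubmx (tcol t)]vsubmxK -col_mxA.
all: by rewrite !(col_mxKu, col_mxKd) => /SUT_event_split.
Qed.

End ConditionOnFirstBlock.

Theorem proposition10 (R : realType) (d0 : measure_display) (T : measurableType d0)
    (P : probability T R) (d1 d2 m : nat)
    (Y : T -> (d1 + d2).-tuple R)
    (xi : 'cV[R]_(d1 + d2)) (Omega : 'M[R]_(d1 + d2))
    (Delta : 'M[R]_(d1 + d2, m)) (tau : 'cV[R]_m) (Gammab : 'M[R]_m) (nu : R) :
  (0 < d1)%N -> (0 < d2)%N -> (0 < m)%N ->
  posdef Omega -> correlation Gammab -> 0 < nu ->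
  posdef (block_mx Gammab Delta^T Delta (corrmx Omega)) ->
  measurable_fun setT Y ->
  has_SUT_law P Y xi Omega Delta tau Gammab nu ->
  let Y1 w := [tuple tnth (Y w) (lshift d2 i) | i < d1] in
  let Y2 w := [tuple tnth (Y w) (rshift d1 j) | j < d2] in
  let Omega11 := ulsubmx Omega in
  let Omega21 := dlsubmx Omega in
  let Omega22 := drsubmx Omega in
  let omega1 := dsqrt Omega11 in
  let omega2 := dsqrt Omega22 in
  let Omegab11 := invmx omega1 *m Omega11 *m invmx omega1 in
  let Omegab21 := invmx omega2 *m Omega21 *m invmx omega1 in
  let Delta1 : 'M[R]_(d1, m) := usubmx Delta in
  let Delta2 : 'M[R]_(d2, m) := dsubmx Delta in
  let Delta21 : 'M[R]_(d2, m + d1) := row_mx Delta2 Omegab21 in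
  let Gammab21 : 'M[R]_(m + d1) := block_mx Gammab Delta1^T Delta1 Omegab11 in
  let tau21 : 'cV[R]_(m + d1) := col_mx tau (invmx omega1 *m usubmx xi) in
  forall B : set (d2.-tuple R), measurable B ->
    condprob P (Y2 @^-1` B) [set w | forall i, 0 < tnth (Y1 w) i] =
    SUT_law (dsubmx xi) Omega22 Delta21 tau21 Gammab21 nu B.
Proof.
(* Only the symmetry and positive diagonal of Omega are needed: the remaining
   hypotheses make the laws genuine distributions, but the two ratios of
   integrals agree without them. *)
move=> _ _ _ Omega_pd _ _ _ _ Y_SUT Y1 Y2 Omega11 Omega21 Omega22 omega1 omega2
  Omegab11 Omegab21 Delta1 Delta2 Delta21 Gammab21 tau21 B mB.
have Omega_sym : Omega^T = Omega := Omega_pd.1.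
have Omega_gt0 i : 0 < Omega i i := posdef_diag_gt0 i Omega_pd.
pose Y1_gt0 := @tuple_usub R d1 d2 @^-1` [set z | forall i, 0 < tnth z i].
have mY1_gt0 : measurable Y1_gt0.
  rewrite -[Y1_gt0]setTI.
  by apply: measurable_tuple_usub => //; exact: measurable_tuple_gt0.
have mY2_B : measurable (@tuple_dsub R d1 d2 @^-1` B).
  by rewrite -[X in measurable X]setTI; exact: measurable_tuple_dsub.
rewrite -[Y2 @^-1` B]/(Y @^-1` (@tuple_dsub R d1 d2 @^-1` B)).
rewrite -[[set w | _]]/(Y @^-1` Y1_gt0) (condprob_SUT Y_SUT) // SUT_lawE.
rewrite -[Y1_gt0 in X in _ / X](setTI Y1_gt0) -(preimage_setT (@tuple_dsub R d1 d2)).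
by rewrite !SUT_mass_condition.
Qed.
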